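(* Let $(\mathbb{Z},H^+)$ be a simple component and let $N_H$ be the unique element of $H^+$ with $N_H-1\notin H^+$ and $N_H+k\in H^+$ for all $k\in\mathbb{Z}^+$. Let $a\in\mathbb{N}$, and let $p,c,d\in\mathbb{N}$ satisfy $\gcd(a,p)=\gcd(a,c)=\gcd(c,d)=1$, $pc\equiv pd\equiv1\pmod a$, $p\in H^+$, $pc>aN_H$ and $d>\max\{(a-1)pc+a(N_H-1),\ ac\}$. Let $G^+=aH^++p\langle c,d\rangle=\{ah+pz: h\in H^+, z\in\langle c,d\rangle\}$. Then for every integer $i$ with $0\le i\le a-1$ and every $x\in\mathbb{Z}\setminus H^+$ we have $ipc+ax\notin G^+$. In particular, setting $l_i=ipc+a(N_H-1)$ for $0\le i\le a-1$, the set $L_H=\{l_0,\dots,l_{a-1}\}$ satisfies $L_H\cap G^+=\emptyset$. Moreover, for each $0\le i\le a-1$, every integer congruent to $i$ modulo $a$ and greater than $l_i$ belongs to $G^+$.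
   Context: A simple component is a simple partially ordered abelian group of the form $(\mathbb{Z},P)$ (simple: every nonzero element $u$ of $P$ is an order-unit, i.e. for all $x$ there is $n$ with $nu\pm x\in P$); its cone $P$ is a submonoid of $\mathbb{Z}^+$ containing all sufficiently large integers. $\langle c,d\rangle$ is the submonoid of $\mathbb{Z}^+$ generated by $c$ and $d$. *)

From mathcomp Require Import all_boot all_order all_algebra.
Set Implicit Arguments. Unset Strict Implicit. Unset Printing Implicit Defensive.
Import Order.TTheory GRing.Theory Num.Theory.
Local Open Scope ring_scope.

(* A simple component (Z, P): P is a positive cone of a partial order on Z
   (0 in P, P + P ⊆ P, P ∩ -P = {0}), the partially ordered group is simple
   (every nonzero u ∈ P is an order-unit), P ⊆ Z^+ and P contains all
   sufficiently large integers. *)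
Definition is_order_unit (P : int -> Prop) (u : int) : Prop :=
  forall x : int, exists n : nat, P (u *+ n + x) /\ P (u *+ n - x).

Definition simple_component (P : int -> Prop) : Prop :=
  [/\ P 0 /\ (forall x y, P x -> P y -> P (x + y)),
      (forall x, P x -> P (- x) -> x = 0),
      (forall u, P u -> u != 0 -> is_order_unit P u),
      (forall x, P x -> 0 <= x)
    & (exists M : int, forall n : int, M <= n -> P n)].

Definition gen2 (c d : nat) (z : int) : Prop :=
  exists m n : nat, z = (m * c + n * d)%N%:Z.

Definition Gplus (H : int -> Prop) (a p c d : nat) (g : int) : Prop :=
  exists h z : int, H h /\ gen2 c d z /\ g = a%:Z * h + p%:Z * z.

From mathcomp Require Import all_boot all_order all_algebra.
From mathcomp Require Import zify.

Set Implicit Arguments.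
Unset Strict Implicit.
Unset Printing Implicit Defensive.
Import Order.TTheory GRing.Theory Num.Theory.
Local Open Scope ring_scope.

(* Since p c = 1 (mod a), the number i p c + a x has residue i mod a.  The
   bound on d puts it below d when x < N_H, and an element a h + p z of G^+
   below d has z = m c; comparing residues gives m = i + a k with k >= 0, so
   x = h + k p c lies in H^+.  Conversely an n = i (mod a) above l_i is
   i p c + a y = a y + p (i c) with y >= N_H. *)

Lemma tail_in_cone (H : int -> Prop) (N y : int) :
  (forall k : nat, H (N + k%:Z)) -> N <= y -> H y.
Proof.
move=> HN; rewrite -subr_ge0 => /gez0_abs y_eq.
by have := HN `|y - N|%N; rewrite y_eq addrC subrK.
Qed.

Lemma cone_mulrn (H : int -> Prop) (u : int) (k : nat) :
  H 0 -> (forall x y, H x -> H y -> H (x + y)) -> H u -> H (u *+ k).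
Proof.
move=> H0 addH Hu; elim: k => [|k IH]; first by rewrite mulr0n.
by rewrite mulrS; apply: addH.
Qed.

Lemma Gplus_lt_d (H : int -> Prop) (a p c d : nat) (g : int) :
  (forall x, H x -> 0 <= x) -> (0 < p)%N ->
  Gplus H a p c d g -> g < d%:Z ->
  exists2 h, H h & exists m : nat, g = a%:Z * h + (m * (p * c))%N%:Z.
Proof.
move=> H_ge0 p_gt0 [h [z [Hh [[m [[|n] ->]] ->]]]] g_lt_d.
  by exists h => //; exists m; rewrite mul0n addn0 mulnCA.
have := H_ge0 h Hh; nia.
Qed.

Lemma eqn_mod1_int (a q : nat) :
  (q = 1 %[mod a])%N -> exists s : int, q%:Z = 1 + s * a%:Z.
Proof.
move=> q_mod1.
have : (a%:Z %| q%:Z - 1)%Z by rewrite -eqz_mod_dvd !modz_nat q_mod1.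
by move/dvdzP => [s qs]; exists s; lia.
Qed.

Lemma residue_decomp (a q i : nat) (n : int) :
  (q = 1 %[mod a])%N -> (a%:Z %| n - i%:Z)%Z ->
  exists y : int, n = (i * q)%N%:Z + a%:Z * y.
Proof.
move=> /eqn_mod1_int [s q_eq] /dvdzP [r n_eq].
by exists (r - i%:Z * s); rewrite PoszM q_eq; lia.
Qed.

Lemma residue_cancel (a q i m : nat) (x h : int) :
  (q = 1 %[mod a])%N -> (i < a)%N ->
  (i * q)%N%:Z + a%:Z * x = a%:Z * h + (m * q)%N%:Z ->
  exists k : nat, x = h + (k * q)%N%:Z.
Proof.
move=> q_mod1 i_lt_a eq_xh.
have a_neq0 : a%:Z != 0 by rewrite eqz_nat -lt0n; apply: leq_ltn_trans i_lt_a.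
have [s q_eq] := eqn_mod1_int q_mod1.
have diff_eq : a%:Z * (x - h) = (m%:Z - i%:Z) * q%:Z.
  by move: eq_xh; rewrite !PoszM; lia.
set k : int := x - h - (m%:Z - i%:Z) * s.
have m_eq : m%:Z = i%:Z + a%:Z * k.
  by move: diff_eq; rewrite q_eq /k; lia.
have k_ge0 : 0 <= k.
  (* otherwise [m <= i - a < 0] *)
  by rewrite leNgt; apply/negP => k_lt0; nia.
exists `|k|%N; rewrite PoszM gez0_abs //.
by apply/(mulfI a_neq0); move: diff_eq; rewrite m_eq; lia.
Qed.

Section ResidueClasses.

Variables (H : int -> Prop) (NH : int) (a p c d : nat).
Hypotheses (H0 : H 0) (addH : forall x y, H x -> H y -> H (x + y)).
Hypothesis H_ge0 : forall x, H x -> 0 <= x.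
Hypothesis tailH : forall k : nat, H (NH + k%:Z).
Hypothesis pc_mod1 : (p * c = 1 %[mod a])%N.

Lemma Gplus_residue_tail (i : nat) (n : int) :
  (a%:Z %| n - i%:Z)%Z -> (i * p * c)%N%:Z + a%:Z * (NH - 1) < n ->
  Gplus H a p c d n.
Proof.
move=> n_mod n_gt; have [y n_eq] := residue_decomp pc_mod1 n_mod.
exists y, (i * c)%N%:Z; split; last split.
- by apply: tail_in_cone tailH _; move: n_gt; rewrite n_eq -mulnA; nia.
- by exists i, 0%N; rewrite addn0.
- by rewrite n_eq mulnCA PoszM addrC.
Qed.

Hypotheses (Hp : H p%:Z) (p_gt0 : (0 < p)%N).
Hypothesis d_big : (a%:Z - 1) * (p * c)%N%:Z + a%:Z * (NH - 1) < d%:Z.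

Lemma notin_Gplus_residue (i : nat) (x : int) :
  (i < a)%N -> ~ H x -> ~ Gplus H a p c d ((i * p * c)%N%:Z + a%:Z * x).
Proof.
move=> i_lt_a Hx G_ix.
have x_lt_NH : x < NH by rewrite ltNge; apply: contra_notN Hx; exact: tail_in_cone.
have [|h Hh [m g_eq]] := Gplus_lt_d H_ge0 p_gt0 G_ix; first nia.
rewrite -mulnA in g_eq; have [k x_eq] := residue_cancel pc_mod1 i_lt_a g_eq.
apply: Hx; rewrite x_eq mulnCA PoszM -[(k * c)%N%:Z]natz mulr_natr.
by apply: addH Hh (cone_mulrn _ H0 addH Hp).
Qed.

End ResidueClasses.

Theorem proposition4p3 (H : int -> Prop) (NH : int) (a p c d : nat) :
  simple_component H ->
  H NH -> ~ H (NH - 1) -> (forall k : nat, H (NH + k%:Z)) ->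
  gcdn a p = 1%N -> gcdn a c = 1%N -> gcdn c d = 1%N ->
  (p * c = 1 %[mod a])%N -> (p * d = 1 %[mod a])%N ->
  H p%:Z ->
  a%:Z * NH < (p * c)%N%:Z ->
  Num.max ((a%:Z - 1) * (p * c)%N%:Z + a%:Z * (NH - 1)) (a * c)%N%:Z < d%:Z ->
  [/\ (forall (i : nat) (x : int), (i < a)%N -> ~ H x ->
         ~ Gplus H a p c d ((i * p * c)%N%:Z + a%:Z * x)),
      (forall i : nat, (i < a)%N ->
         ~ Gplus H a p c d ((i * p * c)%N%:Z + a%:Z * (NH - 1)))
    & (forall (i : nat) (n : int), (i < a)%N ->
         (a%:Z %| n - i%:Z)%Z ->
         (i * p * c)%N%:Z + a%:Z * (NH - 1) < n ->
         Gplus H a p c d n)].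
Proof.
move=> [[H0 addH] _ _ H_ge0 _] HNH HNH1 tailH _ _ _ pc_mod1 _ Hp aNH_lt_pc.
rewrite gt_max => /andP[d_big _].
have p_gt0 : (0 < p)%N.
  have aNH_ge0 : 0 <= a%:Z * NH by apply: mulr_ge0 => //; exact: H_ge0.
  have : (0 < p * c)%N by rewrite -ltz_nat; apply: le_lt_trans aNH_lt_pc.
  by rewrite muln_gt0 => /andP[].
have notin_G := notin_Gplus_residue H0 addH H_ge0 tailH pc_mod1 Hp p_gt0 d_big.
split=> [i x|i i_lt_a|i n _ n_mod n_gt].
- exact: notin_G.
- exact: notin_G i_lt_a HNH1.
- exact (Gplus_residue_tail d tailH pc_mod1 n_mod n_gt).
Qed.
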